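(* For every $\mu\in\mathbb F_q\setminus\{0\}$, the elliptic quadric $\mathcal Q_\mu$ is a $\left(\frac{q^n-1}{q-1}\right)$-ovoid of $\mathcal W_0$, i.e. every generator of $\mathcal W_0$ contains exactly $\frac{q^n-1}{q-1}$ points of $\mathcal Q_\mu$. (Note that for $\mu\neq0$ the quadric $\mathcal Q_\mu$ does not polarize to $\mathcal W_0$.)
   Context: Let $q$ be an even prime power and $n\ge 2$ an integer. Let $\mathrm{PG}(2n+1,q)$ have homogeneous coordinates $(X_1,\dots,X_{2n+2})$. Fix $\delta\in\mathbb F_q$ such that $X^2+X+\delta$ is irreducible over $\mathbb F_q$. For $\mu\in\mathbb F_q$ let $\mathcal Q_\mu$ be the quadric $X_1^2+X_1X_{2n+2}+\delta X_{2n+2}^2+\sum_{i=2}^{n+1}X_iX_{2n+3-i}+\mu(X_{2n}^2+X_{2n}X_{2n+1}+\delta X_{2n+1}^2)=0$, an elliptic quadric. Let $\mathcal W_0$ be the symplectic polar space defined by the alternating form $B_0(X,Y)=\sum_{i=1}^{2n+2}X_iY_{2n+3-i}$ (the polar space to which $\mathcal Q_0$ polarizes); its generators are the totally isotropic $n$-spaces. An $m$-ovoid of a symplectic polar space is a set of points meeting every generator in exactly $m$ points. *)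

From HB Require Import structures.
From mathcomp Require Import all_boot all_order all_algebra.
Set Implicit Arguments. Unset Strict Implicit. Unset Printing Implicit Defensive.
Import GRing.Theory.
Local Open Scope ring_scope.

Section Defs.
Variables (F : finFieldType) (n : nat).

(* Vectors of F^(2n+2); PG(2n+1,q) lives on their 1-dim subspaces. *)
Definition vecT := 'rV[F]_(n.*2.+2).

(* 1-indexed homogeneous coordinate X_i (i = 1 .. 2n+2). *)
Definition X (x : vecT) (i : nat) : F := x 0 (inord i.-1).

Definition B0 (x y : vecT) : F :=
  \sum_(1 <= i < n.*2.+3) X x i * X y (n.*2.+3 - i).

Definition Qform (delta mu : F) (x : vecT) : F :=
  X x 1 ^+ 2 + X x 1 * X x (n.*2.+2) + delta * X x (n.*2.+2) ^+ 2
  + \sum_(2 <= i < n.+2) X x i * X x (n.*2.+3 - i)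
  + mu * (X x n.*2 ^+ 2 + X x n.*2 * X x n.*2.+1 + delta * X x n.*2.+1 ^+ 2).

Definition pspan (v : vecT) : {set vecT} := [set k *: v | k : F].

Definition PGpoints : {set {set vecT}} := [set pspan v | v in [set v : vecT | v != 0]].

Definition quadric_pts (delta mu : F) : {set {set vecT}} :=
  [set p in PGpoints | [forall x in p, Qform delta mu x == 0]].

(* generators of W_0: totally isotropic projective n-spaces,
   i.e. (n+1)-dimensional vector subspaces on which B0 vanishes *)
Definition generator (U : {vspace vecT}) : Prop :=
  \dim U = n.+1 /\ (forall u v, u \in U -> v \in U -> B0 u v = 0).

Definition pts_in (U : {vspace vecT}) : {set {set vecT}} :=
  [set p in PGpoints | p \subset [set x | x \in U]].

Definition m_ovoid (S : {set {set vecT}}) (m : nat) : Prop :=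
  forall U : {vspace vecT}, generator U -> #|S :&: pts_in U| = m.

End Defs.

From HB Require Import structures.
From mathcomp Require Import all_boot all_order all_algebra.
From mathcomp Require Import fingroup pgroup abelian finfield.
From mathcomp Require Import zify ring.
Set Implicit Arguments. Unset Strict Implicit. Unset Printing Implicit Defensive.
Import GRing.Theory.
Local Open Scope ring_scope.

(* In characteristic 2, Q_mu is Q_0 plus mu times an anisotropic binary form in
   X_2n, X_2n+1, so its polar form differs from B_0 only on those two coordinates.
   A generator U of W_0 contains a vector v with X_2n(v) = X_2n+1(v) = 0 and
   Q_0(v) <> 0: otherwise U /\ {X_2n = X_2n+1 = 0} together with <e_2, e_3> would
   span a subspace of dimension n+1 on which Q_0 vanishes, exceeding the Witt index
   n of the elliptic quadric Q_0.  For such v, Q_mu(z + t v) = Q_mu(z) + t^2 Q_mu(v)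
   for every z in U, and squaring is bijective on F, so each coset z + Fv of U
   contains exactly one zero of Q_mu.  Hence Q_mu has q^n zeros in U, that is
   (q^n - 1)/(q - 1) projective points. *)

Lemma even_card_pchar2 (F : finFieldType) : ~~ odd #|F| -> 2%N \in [pchar F].
Proof.
move=> evenF; have [p p_pr pcharFp] := finPcharP F.
have pF := abelem_pgroup (fin_ring_pchar_abelem pcharFp).
have [_ _ [k cardF]] := pgroup_pdiv pF (finNzRing_nontrivial F).
suff p2 : p = 2%N by rewrite -p2.
apply/eqP; rewrite eq_sym -(@dvdn_prime2 2 p) //.
have : (2 %| p ^ k.+1)%N by rewrite -cardF cardsT dvdn2.
by rewrite Euclid_dvdX // => /andP [].
Qed.

Lemma sqrf_surj_pchar2 (F : finFieldType) : 2%N \in [pchar F] ->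
  forall a : F, exists s, s ^+ 2 = a.
Proof.
move=> pcharF2 a.
have sqr_inj : injective (fun s : F => s ^+ 2).
  by move=> s t; rewrite -!(pFrobenius_autE pcharF2); apply: fmorph_inj.
have [g _ gK] := injF_bij sqr_inj.
by exists (g a); rewrite gK.
Qed.

Definition normf (F : ringType) (delta a b : F) := a ^+ 2 + a * b + delta * b ^+ 2.

Lemma normf0 (F : ringType) (delta : F) : normf delta 0 0 = 0.
Proof. by rewrite /normf expr0n /= !(mulr0, addr0). Qed.

Lemma normf_anisotropic (F : fieldType) (delta : F) :
  irreducible_poly ('X^2 + 'X + delta%:P) ->
  forall a b, normf delta a b = 0 -> a = 0 /\ b = 0.
Proof.
move=> [_ irr] a b Nab0.
have [b0 | bn0] := eqVneq b 0.
  move: Nab0; rewrite /normf b0 expr0n /= !(mulr0, addr0) => /eqP.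
  by rewrite expf_eq0 => /andP [_ /eqP].
have : root ('X^2 + 'X + delta%:P) (a / b).
  rewrite rootE !hornerE.
  have -> : (a / b) ^+ 2 + a / b + delta = normf delta a b / b ^+ 2 by rewrite /normf; field.
  by rewrite Nab0 mul0r.
rewrite -dvdp_XsubCl => /irr; rewrite size_XsubC => /(_ isT) /eqp_size.
by rewrite size_XsubC -addrA size_polyDl ?size_polyXn // size_XaddC.
Qed.

Lemma normfD_pchar2 (F : comRingType) (delta a b a' b' : F) : 2%N \in [pchar F] ->
  normf delta (a + a') (b + b') = normf delta a b + normf delta a' b' + (a * b' + a' * b).
Proof.
move=> pcharF2.
transitivity (normf delta a b + normf delta a' b' + (a * b' + a' * b)
              + (a * a' + delta * (b * b')) *+ 2); first by rewrite /normf; ring.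
by rewrite -mulr_natl (pcharf0 pcharF2) mul0r addr0.
Qed.

Lemma big_nat_mirror_pairs (R : nmodType) (n : nat) (G : nat -> R) :
  \sum_(1 <= i < n.*2.+3) G i =
  G 1%N + G n.*2.+2 + \sum_(2 <= i < n.+2) (G i + G (n.*2.+3 - i)%N).
Proof.
rewrite (@big_cat_nat _ _ _ n.+2) /=; [|lia|lia].
have -> : \sum_(n.+2 <= i < n.*2.+3) G i = \sum_(1 <= i < n.+2) G (n.*2.+3 - i)%N.
  rewrite -{1}[n.+2]add1n big_addn big_nat_rev /=.
  have -> : (n.*2.+3 - n.+1 = n.+2)%N by lia.
  apply: eq_big_nat => i /andP [i_gt0 i_lt]; congr G; lia.
by rewrite -big_split /= big_ltn.
Qed.

Section Coordinates.
Variables (F : finFieldType) (n : nat).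
Local Notation V := (vecT F n).
Local Notation m := n.*2.+2.

Lemma XD (x y : V) i : X (x + y) i = X x i + X y i.
Proof. by rewrite /X mxE. Qed.

Lemma XZ (x : V) t i : X (t *: x) i = t * X x i.
Proof. by rewrite /X mxE. Qed.

Lemma B0_split (x y : V) : B0 x y =
  X x 1 * X y m + X x m * X y 1 +
  \sum_(2 <= i < n.+2) (X x i * X y (n.*2.+3 - i) + X x (n.*2.+3 - i) * X y i).
Proof.
rewrite /B0 big_nat_mirror_pairs.
have -> : (n.*2.+3 - 1 = m)%N by lia.
have -> : (n.*2.+3 - m = 1)%N by lia.
by congr (_ + _); apply: eq_big_nat => i /andP [_ ?]; rewrite subKn //; lia.
Qed.

Lemma B0Dl (x y z : V) : B0 (x + y) z = B0 x z + B0 y z.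
Proof. by rewrite /B0 -big_split; apply: eq_bigr => i _; rewrite XD mulrDl. Qed.

Lemma B0_eq0 (x y : V) :
  (forall i, (0 < i < n.*2.+3)%N -> X x i = 0 \/ X y (n.*2.+3 - i) = 0) -> B0 x y = 0.
Proof.
move=> vanish; rewrite /B0 big_nat big1 // => i /vanish [-> | ->].
  by rewrite mul0r.
by rewrite mulr0.
Qed.

Lemma QformE delta mu (x : V) : Qform delta mu x =
  normf delta (X x 1) (X x m) + \sum_(2 <= i < n.+2) X x i * X x (n.*2.+3 - i)
  + mu * normf delta (X x n.*2) (X x n.*2.+1).
Proof. by []. Qed.

Lemma QformZ delta mu (x : V) t : Qform delta mu (t *: x) = t ^+ 2 * Qform delta mu x.
Proof.
rewrite !QformE !XZ.
under eq_bigr do rewrite !XZ mulrACA -expr2.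
by rewrite -mulr_sumr /normf; ring.
Qed.

Lemma Qform_polar delta mu (x y : V) : 2%N \in [pchar F] ->
  Qform delta mu (x + y) = Qform delta mu x + Qform delta mu y
    + (B0 x y + mu * (X x n.*2 * X y n.*2.+1 + X x n.*2.+1 * X y n.*2)).
Proof.
move=> pcharF2; rewrite !QformE B0_split !XD !normfD_pchar2 //.
under eq_bigr do rewrite !XD.
rewrite (eq_bigr (fun i => X x i * X x (n.*2.+3 - i) + X y i * X y (n.*2.+3 - i)
  + (X x i * X y (n.*2.+3 - i) + X x (n.*2.+3 - i) * X y i))) => [|i _]; last by ring.
by rewrite !big_split /=; ring.
Qed.

Definition coord_proj (s : seq nat) (x : V) : 'rV[F]_(size s) :=
  \row_(j < size s) X x (nth 0%N s j).

Fact coord_proj_is_linear s : linear (coord_proj s).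
Proof. by move=> t x y; apply/rowP => j; rewrite !mxE XD XZ. Qed.
HB.instance Definition _ s :=
  GRing.isLinear.Build F V 'rV[F]_(size s) _ (coord_proj s) (coord_proj_is_linear s).

Definition coord_vanish (s : seq nat) : {vspace V} := lker (linfun (coord_proj s)).

Lemma coord_vanishP s (x : V) :
  reflect (forall i, i \in s -> X x i = 0) (x \in coord_vanish s).
Proof.
rewrite memv_ker lfunE /=; apply: (iffP eqP) => [/rowP x_s i | x_s].
  by case/(nthP 0%N) => j j_lt <-; have := x_s (Ordinal j_lt); rewrite !mxE.
by apply/rowP => j; rewrite !mxE x_s ?mem_nth.
Qed.

Lemma dim_coord_vanish s : (m - size s <= \dim (coord_vanish s))%N.
Proof.
have := limg_ker_dim (linfun (coord_proj s)) fullv.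
have : (\dim (limg (linfun (coord_proj s))) <= \dim {:'rV[F]_(size s)})%N.
  exact/dimvS/subvf.
rewrite capfv !dimvf /dim /= !mul1n /coord_vanish.
by move: (\dim (lker _)) (\dim (limg _)) => a b; lia.
Qed.

End Coordinates.

Section RowOrthogonality.
Variables (F : fieldType) (m : nat).
Import VectorInternalTheory.

Lemma rank_vbasis_mx (A : {vspace 'rV[F]_m}) :
  \rank (\matrix_(i < \dim A) tnth (vbasis A) i) = \dim A.
Proof.
have -> : \matrix_(i < \dim A) tnth (vbasis A) i
          = row_base (vs2mx A) *m lin1_mx (@r2v F 'rV[F]_m).
  apply/row_matrixP => i; rewrite row_mul mul_rV_lin1 rowK.
  by rewrite unlock /vbasis_def tnth_mktuple.
rewrite mxrankMfree; first by rewrite (eqP (row_base_free _)).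
apply: inj_row_free => v; rewrite mul_rV_lin1 => r2v_v0.
by rewrite -(r2vK v) r2v_v0 linear0.
Qed.

Lemma dim_orthogonal_dot (A B : {vspace 'rV[F]_m}) :
  (forall a b, a \in A -> b \in B -> (a *m b^T) 0 0 = 0) -> (\dim A + \dim B <= m)%N.
Proof.
move=> AB0.
set MA := \matrix_(i < \dim A) tnth (vbasis A) i.
set MB := \matrix_(i < \dim B) tnth (vbasis B) i.
have MAB0 : MA *m MB^T = 0.
  apply/matrixP => i j; rewrite [RHS]mxE.
  rewrite -(AB0 _ _ (vbasis_mem (mem_tnth i _)) (vbasis_mem (mem_tnth j _))).
  by rewrite !mxE; apply: eq_bigr => l _; rewrite !mxE.
have : (MA <= kermx MB^T)%MS by rewrite sub_kermx MAB0.
move/mxrankS; rewrite mxrank_ker mxrank_tr !rank_vbasis_mx.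
by have := rank_leq_col MB; rewrite rank_vbasis_mx; lia.
Qed.

End RowOrthogonality.

Section Polarity.
Variables (F : finFieldType) (n : nat).
Local Notation V := (vecT F n).
Local Notation m := n.*2.+2.

Definition rev_row (y : V) : V := \row_l y 0 (rev_ord l).

Fact rev_row_is_linear : linear rev_row.
Proof. by move=> t x y; apply/rowP => l; rewrite !mxE. Qed.
HB.instance Definition _ := GRing.isLinear.Build F V V _ rev_row rev_row_is_linear.

Lemma rev_row_inj : injective rev_row.
Proof.
move=> x y /rowP xy; apply/rowP => l.
by have := xy (rev_ord l); rewrite !mxE rev_ordK.
Qed.

Lemma B0_rev_row (x y : V) : B0 x y = (x *m (rev_row y)^T) 0 0.
Proof.
rewrite /B0 big_add1 /= big_mkord mxE; apply: eq_bigr => i _.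
rewrite /X !mxE; congr (x 0 _ * y 0 _); apply: val_inj; rewrite /= inordK //=; lia.
Qed.

Lemma dim_B0_orthogonal (A B : {vspace V}) :
  (forall a b, a \in A -> b \in B -> B0 a b = 0) -> (\dim A + \dim B <= m)%N.
Proof.
move=> AB0; have revB : \dim (linfun rev_row @: B) = \dim B.
  apply: limg_dim_eq; suff /eqP -> : lker (linfun rev_row) == 0%VS by rewrite capv0.
  by apply/lker0P => x y; rewrite !lfunE; apply: rev_row_inj.
rewrite -revB; apply: dim_orthogonal_dot => a _ aA /memv_imgP [b bB ->].
by rewrite lfunE -B0_rev_row AB0.
Qed.

End Polarity.

Section WittIndex.
Variables (F : finFieldType) (n : nat) (delta : F).
Hypothesis pcharF2 : 2%N \in [pchar F].
Hypothesis normf_anis : forall a b : F, normf delta a b = 0 -> a = 0 /\ b = 0.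
Local Notation V := (vecT F n).
Local Notation m := n.*2.+2.
Local Notation Q0 := (Qform delta 0).

Lemma B0_singular (x y : V) : Q0 x = 0 -> Q0 y = 0 -> Q0 (x + y) = 0 -> B0 x y = 0.
Proof.
by move=> Qx Qy; rewrite Qform_polar // Qx Qy mul0r !addr0 add0r.
Qed.

Lemma dim_totally_singular (W : {vspace V}) :
  (forall w, w \in W -> Q0 w = 0) -> (\dim W <= n)%N.
Proof.
(* On W :&: G, Q_0 reduces to the anisotropic form in X_1, X_2n+2, which forces
   W + G to be orthogonal to W :&: G. *)
move=> W_sing; set G := coord_vanish F n (iota n.+2 n).
have end_coords y : y \in (W :&: G)%VS -> X y 1 = 0 /\ X y m = 0.
  case/memv_capP => yW /coord_vanishP yG; apply: normf_anis.
  have := W_sing y yW; rewrite QformE mul0r addr0 big_nat big1 ?addr0 // => i i_range.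
  by rewrite (yG (n.*2.+3 - i)%N) ?mulr0 // mem_iota; lia.
have : (\dim (W + G) + \dim (W :&: G) <= m)%N.
  apply: dim_B0_orthogonal => _ y /memv_addP [w wW [g /coord_vanishP gG ->]] yWG.
  have [y1 ym] := end_coords y yWG; case/memv_capP: yWG => yW /coord_vanishP yG.
  rewrite B0Dl B0_singular ?W_sing ?memvD // add0r.
  apply: B0_eq0 => i i_range.
  have [iG | iG] := boolP (i \in iota n.+2 n); first by left; apply: gG.
  have [-> | i_ne1] := eqVneq i 1%N; first by right; rewrite subn1.
  have [-> | i_nem] := eqVneq i m; first by right; rewrite subSnn.
  by right; apply: yG; move: iG; rewrite !mem_iota; lia.
have := dimv_sum_cap W G; have := @dim_coord_vanish F n (iota n.+2 n).
by rewrite size_iota -/G; lia.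
Qed.

Lemma generator_nonsingular_vector (U : {vspace V}) : (2 <= n)%N -> generator U ->
  exists2 v, v \in (U :&: coord_vanish F n [:: n.*2; n.*2.+1])%VS & Q0 v != 0.
Proof.
move=> n_ge2 [dimU U_iso].
set Sp := coord_vanish F n [:: n.*2; n.*2.+1].
(* S = <e_2, e_3> is totally singular for Q_0 and orthogonal to Sp. *)
set S := coord_vanish F n (1%N :: iota 4 n.*2.-1).
have [/exists_inP [v vT Qv] | ] := boolP [exists v in (U :&: Sp)%VS, Q0 v != 0].
  by exists v.
rewrite negb_exists_in => /forall_inP T_sing; exfalso.
have SpS_orth p s : p \in Sp -> s \in S -> B0 p s = 0.
  move=> /coord_vanishP pSp /coord_vanishP sS; apply: B0_eq0 => i i_range.
  have [iSp | iSp] := boolP (i \in [:: n.*2; n.*2.+1]); first by left; apply: pSp.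
  by right; apply: sS; move: iSp; rewrite !inE mem_iota; lia.
have S_sing s : s \in S -> Q0 s = 0.
  move=> /coord_vanishP sS; rewrite QformE mul0r addr0 big_nat big1 => [|i i_range].
    by rewrite !sS ?normf0 ?addr0 // inE mem_iota; lia.
  by rewrite (sS (n.*2.+3 - i)%N) ?mulr0 // inE mem_iota; lia.
have TS_sing w : w \in ((U :&: Sp) + S)%VS -> Q0 w = 0.
  case/memv_addP => t tT [s sS ->]; have /memv_capP [_ tSp] := tT.
  rewrite Qform_polar // (S_sing s sS) (SpS_orth t s tSp sS).
  by rewrite (eqP (negbNE (T_sing t tT))) mul0r !addr0.
have := dim_totally_singular TS_sing.
have : (\dim (U + Sp) + \dim (U :&: S) <= m)%N.
  apply: dim_B0_orthogonal => _ y /memv_addP [u uU [p pSp ->]] /memv_capP [yU yS].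
  by rewrite B0Dl U_iso // SpS_orth // add0r.
have : (\dim ((U :&: Sp) :&: S) <= \dim (U :&: S))%N.
  by apply/dimvS/subvP => x /memv_capP [/memv_capP [xU _] xS]; rewrite memv_cap xU.
have := dimv_sum_cap U Sp; have := dimv_sum_cap (U :&: Sp)%VS S.
have := @dim_coord_vanish F n [:: n.*2; n.*2.+1].
have := @dim_coord_vanish F n (1%N :: iota 4 n.*2.-1).
rewrite /= size_iota -/Sp -/S dimU; lia.
Qed.

End WittIndex.

Section ProjectivePoints.
Variables (F : finFieldType) (n : nat).
Local Notation V := (vecT F n).
Local Notation pspan := (@pspan F n).

Lemma card_pspan (z : V) : z != 0 -> #|pspan z| = #|F|.
Proof.
move=> nz_z; rewrite card_imset // => k1 k2 /eqP.
by rewrite -subr_eq0 -scalerBl scaler_eq0 (negbTE nz_z) orbF subr_eq0 => /eqP.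
Qed.

Lemma pspan_eq (x z : V) : x != 0 -> (pspan x == pspan z) = (x \in pspan z).
Proof.
move=> nz_x; apply/eqP/idP => [<- | /imsetP [k _ xk]].
  by apply/imsetP; exists 1; rewrite ?scale1r.
have nz_k : k != 0 by apply: contraNneq nz_x => k0; rewrite xk k0 scale0r.
apply/setP => y; apply/imsetP/imsetP => [[c _ ->] | [c _ ->]].
  by exists (c * k); rewrite ?xk ?scalerA.
by exists (c / k); rewrite ?xk ?scalerA ?mulfVK.
Qed.

Lemma card_pspan_cone (Z : {set V}) : (forall k z, z \in Z -> k *: z \in Z) ->
  (#|pspan @: (Z :\ 0%R)| * (#|F| - 1) = #|Z :\ 0%R|)%N.
Proof.
move=> Z_cone; rewrite -sum_nat_const -[in RHS]sum1_card (partition_big_imset pspan).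
apply: eq_bigr => _ /imsetP [z /setD1P [nz_z zZ] ->]; rewrite sum1_card.
rewrite -(card_pspan nz_z) (cardsD1 (0 : V)) (_ : (0 : V) \in _); last first.
  by apply/imsetP; exists 0; rewrite ?scale0r.
rewrite add1n subn1 /=; apply: eq_card => x; rewrite [in RHS]unfold_in /= !inE.
have [// | nz_x /=] := eqVneq x 0; rewrite pspan_eq //.
apply/idP/andP => [xz | [] //]; split => //.
by have /imsetP [k _ ->] := xz; apply: Z_cone.
Qed.

End ProjectivePoints.

Section QuadricInSubspace.
Variables (F : finFieldType) (n : nat) (delta mu : F).
Hypothesis pcharF2 : 2%N \in [pchar F].
Local Notation V := (vecT F n).
Local Notation Q := (Qform delta mu).

Definition zeros_in (U : {vspace V}) : {set V} := [set x | (x \in U) && (Q x == 0)].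

Lemma zeros_in0 U : 0 \in zeros_in U.
Proof. by rewrite inE mem0v -(scale0r (0 : V)) QformZ expr0n /= mul0r. Qed.

Lemma zeros_in_cone U k z : z \in zeros_in U -> k *: z \in zeros_in U.
Proof. by rewrite !inE QformZ => /andP [zU /eqP ->]; rewrite memvZ // mulr0 eqxx. Qed.

Lemma quadric_pts_in U :
  quadric_pts n delta mu :&: pts_in U = @pspan F n @: (zeros_in U :\ 0).
Proof.
apply/setP => p; rewrite !inE; apply/idP/imsetP.
  case/andP => /andP [/imsetP [v]]; rewrite inE => nz_v -> Qp /andP [_ pU].
  have vp : v \in pspan v by apply/imsetP; exists 1; rewrite ?scale1r.
  exists v => //; rewrite !inE nz_v (forall_inP Qp v vp) andbT.
  by have := subsetP pU v vp; rewrite inE.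
case=> z; rewrite !inE => /and3P [nz_z zU /eqP Qz] ->.
have p_z : pspan z \in PGpoints F n by apply/imsetP; exists z; rewrite ?inE.
rewrite p_z; apply/andP; split.
  by apply/forall_inP => _ /imsetP [k _ ->]; rewrite QformZ Qz mulr0.
by apply/subsetP => _ /imsetP [k _ ->]; rewrite inE memvZ.
Qed.

Lemma Qform_pair_vanish (x : V) : x \in coord_vanish F n [:: n.*2; n.*2.+1] ->
  Q x = Qform delta 0 x.
Proof.
move=> /coord_vanishP x0; rewrite !QformE.
have [-> ->] : X x n.*2 = 0 /\ X x n.*2.+1 = 0 by split; apply: x0; rewrite !inE eqxx ?orbT.
by rewrite normf0 mulr0 mul0r.
Qed.

Lemma card_zeros_in (U : {vspace V}) v :
  (forall u w, u \in U -> w \in U -> B0 u w = 0) ->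
  v \in (U :&: coord_vanish F n [:: n.*2; n.*2.+1])%VS -> Q v != 0 ->
  (#|zeros_in U| * #|F| = #|F| ^ \dim U)%N.
Proof.
move=> U_iso /memv_capP [vU /coord_vanishP v0] nz_Qv.
have Q_shift z t : z \in U -> Q (z + t *: v) = Q z + t ^+ 2 * Q v.
  move=> zU; rewrite Qform_polar // U_iso ?memvZ // QformZ !XZ.
  by rewrite !v0 ?inE ?eqxx ?orbT // !(mulr0, addr0).
pose shift (p : V * F) := p.1 + p.2 *: v.
rewrite -(card_vspace U) -cardsT -cardsX.
have -> : #|U| = #|shift @: setX (zeros_in U) [set: F]|.
  rewrite -cardsE; apply: eq_card => x; rewrite !inE.
  apply/idP/imsetP => [xU | [[z t] /setXP [zZ _] ->]].
    have [s s2] := sqrf_surj_pchar2 pcharF2 (Q x / Q v).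
    exists (x - s *: v, s); rewrite ?inE.
      rewrite memvB ?memvZ //= -scaleNr Q_shift ?memvB ?memvZ //.
      by rewrite sqrrN s2 mulfVK // addrr_pchar2 ?eqxx.
    by rewrite /shift /= subrK.
  by move: zZ; rewrite inE => /andP [zU _]; rewrite /shift /= memvD ?memvZ.
rewrite card_in_imset // => [[z t] [z' t']] /setXP [zZ _] /setXP [z'Z _].
move: zZ z'Z; rewrite !inE => /andP [zU /eqP Qz] /andP [z'U /eqP Qz'].
rewrite /shift /= => zz'.
have z'E : z' = z + (t - t') *: v by rewrite scalerBl addrA zz' addrK.
have : (t - t') ^+ 2 * Q v = 0 by rewrite -[_ * _]add0r -Qz -Q_shift // -z'E Qz'.
move/eqP; rewrite mulf_eq0 (negbTE nz_Qv) orbF expf_eq0 /= subr_eq0 => /eqP tt'.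
by move: z'E; rewrite tt' subrr scale0r addr0 => ->.
Qed.

End QuadricInSubspace.

Theorem mainTheorem6 (F : finFieldType) (n : nat) (delta mu : F) :
  ~~ odd #|F| ->
  (2 <= n)%N ->
  irreducible_poly ('X^2 + 'X + delta%:P : {poly F}) ->
  mu != 0 ->
  m_ovoid (quadric_pts n delta mu) ((#|F| ^ n - 1) %/ (#|F| - 1))%N.
Proof.
move=> evenF n_ge2 irr _ U genU; have [dimU U_iso] := genU.
have pcharF2 := even_card_pchar2 evenF.
have [v vU Q0v] := generator_nonsingular_vector pcharF2 (normf_anisotropic irr) n_ge2 genU.
have Qv : Qform delta mu v != 0.
  by rewrite Qform_pair_vanish //; case/memv_capP: vU.
have q_gt1 := finNzRing_gt1 F.
have := card_zeros_in pcharF2 U_iso vU Qv; rewrite dimU expnSr => /eqP.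
rewrite eqn_pmul2r ?(ltnW q_gt1) // => /eqP cardZ.
have := cardsD1 0 (zeros_in delta mu U); rewrite zeros_in0 cardZ add1n => cardZ0.
have := card_pspan_cone (@zeros_in_cone F n delta mu U).
by rewrite -quadric_pts_in cardZ0 subSS subn0 => <-; rewrite mulnK // subn_gt0.
Qed.
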